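(* Let $n\geq2$ be an integer, $b:=-n+i$, and $D\subset\{0,1,\ldots,n^2\}$. Let $\alpha\in E_{n,D}$ and suppose there is exactly one sequence $(\alpha_j)_{j\ge1}$ with $\alpha_j\in D-D$ for all $j$ and $\alpha=\sum_{j\ge1}\alpha_jb^{-j}$. Then $$C_{n,D}\cap(C_{n,D}+\alpha)=\Big\{\sum_{j\ge1}z_jb^{-j}: z_j\in D\cap(D+\alpha_j)\text{ for all }j\Big\}.$$
   Context: $C_{n,D}$ is the attractor of $\{z\mapsto b^{-1}(z+d): d\in D\}$, i.e. $C_{n,D}=\{\sum_{j\ge1}d_jb^{-j}: d_j\in D\}$. $E_{n,D}$ is the attractor of $\{z\mapsto b^{-1}(z+\delta):\delta\in D-D\}$, i.e. $E_{n,D}=\{\sum_{j\ge1}\delta_jb^{-j}: \delta_j\in D-D\}$, where $D-D=\{d-d':d,d'\in D\}$. *)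

From Stdlib Require Import Reals ZArith.
From Coquelicot Require Import Coquelicot.
Open Scope R_scope.

Definition base (n : nat) : C := (- INR n, 1)%R.

(* digit sequences are indexed from 0: digit k corresponds to j = k+1,
   i.e. expansion a z  <->  z = sum_{j>=1} a_{j} b^{-j} with a_j := a (j-1). *)
Definition expansion (n : nat) (a : nat -> Z) (z : C) : Prop :=
  is_series (fun k : nat => Cmult (RtoC (IZR (a k))) (Cinv (pow_n (base n) (S k)))) z.

Definition diffset (D : Z -> Prop) (d : Z) : Prop :=
  exists x y : Z, D x /\ D y /\ d = (x - y)%Z.

Definition CnD (n : nat) (D : Z -> Prop) (z : C) : Prop :=
  exists a : nat -> Z, (forall k, D (a k)) /\ expansion n a z.

Definition EnD (n : nat) (D : Z -> Prop) (z : C) : Prop :=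
  exists a : nat -> Z, (forall k, diffset D (a k)) /\ expansion n a z.

Definition translate (S : C -> Prop) (alpha : C) (z : C) : Prop :=
  exists c : C, S c /\ z = Cplus c alpha.

(* Expansions in base b are linear in the digit sequence.  If z lies in both
   C_{n,D} and C_{n,D} + alpha, write z = sum x_j b^-j and z - alpha = sum y_j b^-j
   with digits in D; then x_j - y_j is a (D - D)-expansion of alpha, so by
   uniqueness x_j - y_j = alpha_j and x_j lies in D /\ (D + alpha_j).  Conversely,
   digits z_j in D /\ (D + alpha_j) give the D-expansion z_j - alpha_j of z - alpha. *)
From Stdlib Require Import Reals ZArith Lia.
From Coquelicot Require Import Coquelicot.

Lemma expansion_minus n x y z w :
  expansion n x z -> expansion n y w ->
  expansion n (fun k => (x k - y k)%Z) (Cminus z w).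
Proof.
  unfold expansion; intros Hx Hy.
  eapply is_series_ext; [|exact (is_series_minus _ _ _ _ Hx Hy)].
  intros k; simpl.
  rewrite minus_IZR, RtoC_minus.
  change (plus ?u (opp ?v)) with (Cminus u v).
  unfold Cminus; ring.
Qed.

Lemma diffset_sub (D : Z -> Prop) x y : D x -> D y -> diffset D (x - y).
Proof. intros Hx Hy; exists x, y; auto. Qed.

Lemma CnD_translate_digits n D alpha z :
  CnD n D z -> translate (CnD n D) alpha z ->
  exists x y : nat -> Z,
    (forall k, D (x k) /\ D (y k)) /\ expansion n x z /\
    expansion n (fun k => (x k - y k)%Z) alpha.
Proof.
  intros [x [Hx Ex]] [c [[y [Hy Ey]] ->]].
  exists x, y; repeat split; auto.
  replace alpha with (Cminus (Cplus c alpha) c) by (unfold Cminus; ring).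
  now apply expansion_minus.
Qed.

Lemma translate_CnD_of_digits n D zs a alpha z :
  (forall k, D (zs k - a k)%Z) -> expansion n zs z -> expansion n a alpha ->
  translate (CnD n D) alpha z.
Proof.
  intros Hd Ez Ea.
  exists (Cminus z alpha); split.
  - exists (fun k => (zs k - a k)%Z); split; [exact Hd|].
    now apply expansion_minus.
  - unfold Cminus; ring.
Qed.

Theorem lemma5p4 (n : nat) (hn : (2 <= n)%nat) (D : Z -> Prop)
  (hD : forall d, D d -> (0 <= d <= Z.of_nat (n * n))%Z)
  (alpha : C) (halpha : EnD n D alpha)
  (a : nat -> Z) (ha : forall k, diffset D (a k)) (hexp : expansion n a alpha)
  (huniq : forall a' : nat -> Z, (forall k, diffset D (a' k)) ->
           expansion n a' alpha -> a' = a) :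
  forall z : C,
    (CnD n D z /\ translate (CnD n D) alpha z) <->
    (exists zs : nat -> Z,
        (forall k, D (zs k) /\ (exists d, D d /\ zs k = (d + a k)%Z)) /\
        expansion n zs z).
Proof.
  intros z; split.
  - intros [Hz Htz].
    destruct (CnD_translate_digits _ _ _ _ Hz Htz) as (x & y & Hxy & Ex & Exy).
    assert (Hdiff : (fun k => (x k - y k)%Z) = a).
    { apply huniq; [|exact Exy].
      intros k; destruct (Hxy k); now apply diffset_sub. }
    exists x; split; [|exact Ex].
    intros k; destruct (Hxy k) as [Hxk Hyk]; split; [exact Hxk|].
    exists (y k); split; [exact Hyk|].
    pose proof (f_equal (fun f => f k) Hdiff) as Hk; simpl in Hk; lia.
  - intros [zs [Hzs Ez]]; split.
    + exists zs; split; [intros k; apply Hzs | exact Ez].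
    + apply (translate_CnD_of_digits _ _ zs a); [|exact Ez|exact hexp].
      intros k; destruct (Hzs k) as [_ [d [Hd ->]]].
      now replace (d + a k - a k)%Z with d by lia.
Qed.
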